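(* Let $0<3x_0<L$, $\mu>0$, and $\mu_0=-\frac{x_0}{L+x_0}+2\sqrt{\frac{x_0}{L+x_0}}$. Consider $$(r\ddot u)''+\mu(q\dot u)'+pu=0\quad\text{on }(0,2L).\qquad(\ast)$$ (i) If $\mu<\mu_0$, every solution of $(\ast)$ is a linear combination of $\cos\alpha\theta\sinh\beta\theta$, $\sin\alpha\theta\cosh\beta\theta$, $\sin\alpha\theta\sinh\beta\theta$, $\cos\alpha\theta\cosh\beta\theta$, where $\alpha=\frac12\sqrt{\mu+\frac{x_0}{L+x_0}+2\sqrt{\frac{x_0}{L+x_0}}}$ and $\beta=\frac12\sqrt{-\mu-\frac{x_0}{L+x_0}+2\sqrt{\frac{x_0}{L+x_0}}}$. (ii) If $\mu=\mu_0$, every solution of $(\ast)$ is a linear combination of $\sin\alpha\theta$, $\cos\alpha\theta$, $\theta\sin\alpha\theta$, $\theta\cos\alpha\theta$ (with $\alpha$ as in (i)). (iii) If $\mu>\mu_0$, every solution of $(\ast)$ is a linear combination of $\sin(\alpha-\gamma)\theta$, $\sin(\alpha+\gamma)\theta$, $\cos(\alpha-\gamma)\theta$, $\cos(\alpha+\gamma)\theta$, with $\alpha$ as in (i) and $\gamma=\frac12\sqrt{\mu+\frac{x_0}{L+x_0}-2\sqrt{\frac{x_0}{L+x_0}}}$. In each case the four functions are linearly independent.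
   Context: $\sigma=\pi\sqrt{x_0/(L+x_0)}$, $k=L/\sin\sigma$, $\lambda=\frac{2L}{L+x_0}$, $H(s)=\frac{\pi}{\sigma\sqrt{k^2-(s-L)^2}}$ for $s\in[0,2L]$ (the curvature of the critical curve $\gamma(x_0,L)$), $\theta(s)=\int_0^sH(l)\,dl=\pi\big(1+\frac1\sigma\arcsin\frac{s-L}{k}\big)$, so $\theta(0)=0$, $\theta(2L)=2\pi$. Set $r=2/H^3$, $q=2/H$, $p=(2-\lambda)H$. Derivatives ($'$ and dots) are with respect to $s$; solutions are classical ($C^4$) solutions on $(0,2L)$. *)

From Stdlib Require Import Reals Lra.
From Coquelicot Require Import Coquelicot.
Open Scope R_scope.

Section Defs.
Variables x0 L : R.

Definition sigma0 : R := PI * sqrt (x0 / (L + x0)).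
Definition kk : R := L / sin sigma0.
Definition lambda0 : R := 2 * L / (L + x0).
(* curvature of the critical curve gamma(x0,L) *)
Definition Hc (s : R) : R := PI / (sigma0 * sqrt (kk ^ 2 - (s - L) ^ 2)).
Definition theta (s : R) : R := PI * (1 + / sigma0 * asin ((s - L) / kk)).
Definition rr (s : R) : R := 2 / (Hc s ^ 3).
Definition qq (s : R) : R := 2 / Hc s.
Definition pp (s : R) : R := (2 - lambda0) * Hc s.

Definition in_dom (s : R) : Prop := 0 < s < 2 * L.

Definition C4_on (u : R -> R) : Prop :=
  forall s, in_dom s ->
    (forall n, (n <= 4)%nat -> ex_derive_n u n s) /\
    continuous (Derive_n u 4) s.

Definition is_solution (mu : R) (u : R -> R) : Prop :=
  C4_on u /\
  forall s, in_dom s ->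
    Derive (fun t => Derive (fun t' => rr t' * Derive_n u 2 t') t) s
    + mu * Derive (fun t => qq t * Derive u t) s
    + pp s * u s = 0.

Definition basis_of_solutions (mu : R) (f1 f2 f3 f4 : R -> R) : Prop :=
  (forall u, is_solution mu u ->
     exists c1 c2 c3 c4 : R, forall s, in_dom s ->
       u s = c1 * f1 (theta s) + c2 * f2 (theta s) + c3 * f3 (theta s) + c4 * f4 (theta s))
  /\
  (forall c1 c2 c3 c4 : R,
     (forall s, in_dom s ->
        c1 * f1 (theta s) + c2 * f2 (theta s) + c3 * f3 (theta s) + c4 * f4 (theta s) = 0) ->
     c1 = 0 /\ c2 = 0 /\ c3 = 0 /\ c4 = 0).

Definition mu0 : R := - (x0 / (L + x0)) + 2 * sqrt (x0 / (L + x0)).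
Definition alpha (mu : R) : R :=
  / 2 * sqrt (mu + x0 / (L + x0) + 2 * sqrt (x0 / (L + x0))).
Definition beta (mu : R) : R :=
  / 2 * sqrt (- mu - x0 / (L + x0) + 2 * sqrt (x0 / (L + x0))).
Definition gamma (mu : R) : R :=
  / 2 * sqrt (mu + x0 / (L + x0) - 2 * sqrt (x0 / (L + x0))).

End Defs.

From Stdlib Require Import Reals Lra Lia.
From Coquelicot Require Import Coquelicot.
Open Scope R_scope.

(* With [c = x0 / (L + x0)], [a = sqrt c] and [sigma0 = PI a], the map
   [theta] is inverted by [s = L + k sin (a theta - sigma0)], and along it
   [ds/dtheta = a k cos (a theta - sigma0) = 1 / H].  In the variable [theta]
   the equation becomes [w'''' + (mu + c) w'' + c w = 0], whose characteristic
   polynomial has the roots [+/-beta +/- i alpha], the double roots [+/-i alpha],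
   or [+/-i (alpha +/- gamma)] according to the sign of [mu - mu0].  Each case is
   solved by factoring the operator into two second-order ones; independence
   follows by applying one factor to a vanishing combination, which kills half
   of it and leaves a second-order combination that must vanish. *)

Lemma is_derive_eq (f : R -> R) (x l l' : R) :
  is_derive f x l -> l = l' -> is_derive f x l'.
Proof. intros H ->; exact H. Qed.

Lemma is_derive_Rplus (f g : R -> R) (t a b : R) :
  is_derive f t a -> is_derive g t b -> is_derive (fun x => f x + g x) t (a + b).
Proof. intros; apply (is_derive_plus f g); auto. Qed.

Lemma is_derive_Rminus (f g : R -> R) (t a b : R) :
  is_derive f t a -> is_derive g t b -> is_derive (fun x => f x - g x) t (a - b).
Proof. intros; apply (is_derive_minus f g); auto. Qed.

Lemma is_derive_Rmult (f g : R -> R) (t a b : R) :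
  is_derive f t a -> is_derive g t b ->
  is_derive (fun x => f x * g x) t (a * g t + f t * b).
Proof. intros; apply (is_derive_mult f g); auto. intros; apply Rmult_comm. Qed.

Lemma is_derive_Rconst (k t : R) : is_derive (fun _ : R => k) t 0.
Proof. auto_derive; auto. Qed.

Lemma is_derive_Rid (t : R) : is_derive (fun x => x) t 1.
Proof. auto_derive; auto. Qed.

Lemma is_derive_cos_scal (a t : R) :
  is_derive (fun x => cos (a * x)) t (- a * sin (a * t)).
Proof. auto_derive; auto; ring. Qed.

Lemma is_derive_sin_scal (a t : R) :
  is_derive (fun x => sin (a * x)) t (a * cos (a * t)).
Proof. auto_derive; auto; ring. Qed.

Lemma is_derive_exp_scal (a t : R) :
  is_derive (fun x => exp (a * x)) t (a * exp (a * t)).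
Proof. auto_derive; auto; ring. Qed.

Lemma locally_open_interval (lo hi t : R) :
  lo < t < hi -> locally t (fun y => lo < y < hi).
Proof.
intros Ht. apply (locally_open (fun y => lo < y /\ y < hi)); auto.
apply open_and; [apply open_gt | apply open_lt].
Qed.

Lemma derive_0_const_on (f : R -> R) (lo hi : R) :
  (forall t, lo < t < hi -> is_derive f t 0) ->
  forall t1 t2, lo < t1 < hi -> lo < t2 < hi -> f t1 = f t2.
Proof.
intros Hd t1 t2 H1 H2.
assert (Hin : forall x, Rmin t1 t2 <= x <= Rmax t1 t2 -> lo < x < hi).
{ intros x Hx. unfold Rmin, Rmax in Hx. destruct (Rle_dec t1 t2); lra. }
destruct (MVT_gen f t1 t2 (fun _ => 0)) as [c [_ Hc]].
- intros x Hx. apply Hd, Hin. lra.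
- intros x Hx. apply continuity_pt_filterlim, (ex_derive_continuous f).
  exists 0. apply Hd, Hin, Hx.
- lra.
Qed.

Lemma derive_vanishes_on (g g1 : R -> R) (lo hi : R) :
  (forall t, lo < t < hi -> g t = 0) ->
  (forall t, lo < t < hi -> is_derive g t (g1 t)) ->
  forall t, lo < t < hi -> g1 t = 0.
Proof.
intros Hg Hd t Ht.
assert (H0 : is_derive (fun _ => 0) t (g1 t)).
{ apply (is_derive_ext_loc g); [| exact (Hd t Ht)].
  apply (filter_imp (fun y => lo < y < hi)); [intros y Hy; apply Hg, Hy |].
  now apply locally_open_interval. }
apply is_derive_unique in H0. rewrite <- H0. apply Derive_const.
Qed.

(** * Second-order equations *)

Definition trig (a P Q t : R) : R := P * cos (a * t) + Q * sin (a * t).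
Definition exp_trig (b a P Q t : R) : R := exp (b * t) * trig a P Q t.

Lemma is_derive_trig (a P Q t : R) :
  is_derive (trig a P Q) t (trig a (a * Q) (- (a * P)) t).
Proof.
unfold trig. eapply is_derive_eq.
- apply is_derive_Rplus; apply is_derive_scal;
    [apply is_derive_cos_scal | apply is_derive_sin_scal].
- ring.
Qed.

Lemma is_derive_exp_trig (b a P Q t : R) :
  is_derive (exp_trig b a P Q) t (exp_trig b a (b * P + a * Q) (b * Q - a * P) t).
Proof.
unfold exp_trig. eapply is_derive_eq.
- apply is_derive_Rmult; [apply is_derive_exp_scal | apply is_derive_trig].
- unfold trig; ring.
Qed.

Lemma is_derive_id_mult_trig (a P Q t : R) :
  is_derive (fun x => x * trig a P Q x) t
    (trig a P Q t + t * trig a (a * Q) (- (a * P)) t).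
Proof.
eapply is_derive_eq.
- apply is_derive_Rmult; [apply is_derive_Rid | apply is_derive_trig].
- cbv beta; ring.
Qed.

Lemma harmonic_solution (y y1 y2 : R -> R) (a lo hi : R) : a <> 0 -> lo < hi ->
  (forall t, lo < t < hi ->
     is_derive y t (y1 t) /\ is_derive y1 t (y2 t) /\ y2 t = - a ^ 2 * y t) ->
  exists P Q, forall t, lo < t < hi -> y t = trig a P Q t.
Proof.
intros Ha Hlh H.
set (m := (lo + hi) / 2).
assert (Hm : lo < m < hi) by (unfold m; lra).
(* first integrals of [y'' = -a^2 y] *)
set (E1 := fun t => y t * cos (a * t) - y1 t * sin (a * t) / a).
set (E2 := fun t => y t * sin (a * t) + y1 t * cos (a * t) / a).
exists (E1 m), (E2 m). intros t Ht.
assert (C1 : E1 m = E1 t).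
{ apply (derive_0_const_on E1 lo hi); auto.
  intros s Hs. destruct (H s Hs) as [D0 [D1 E]]. unfold E1, Rdiv.
  eapply is_derive_eq.
  + apply is_derive_Rminus; [apply is_derive_Rmult; [exact D0 | apply is_derive_cos_scal] |].
    apply is_derive_Rmult; [apply is_derive_Rmult; [exact D1 | apply is_derive_sin_scal] |].
    apply is_derive_Rconst.
  + rewrite E. field. exact Ha. }
assert (C2 : E2 m = E2 t).
{ apply (derive_0_const_on E2 lo hi); auto.
  intros s Hs. destruct (H s Hs) as [D0 [D1 E]]. unfold E2, Rdiv.
  eapply is_derive_eq.
  + apply is_derive_Rplus; [apply is_derive_Rmult; [exact D0 | apply is_derive_sin_scal] |].
    apply is_derive_Rmult; [apply is_derive_Rmult; [exact D1 | apply is_derive_cos_scal] |].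
    apply is_derive_Rconst.
  + rewrite E. field. exact Ha. }
rewrite C1, C2. unfold E1, E2, trig.
pose proof (sin2_cos2 (a * t)) as HS. unfold Rsqr in HS.
transitivity (y t * (sin (a * t) * sin (a * t) + cos (a * t) * cos (a * t))).
- rewrite HS; ring.
- field; exact Ha.
Qed.

Lemma trig_eq0 (a P Q lo hi : R) : a <> 0 -> lo < hi ->
  (forall t, lo < t < hi -> trig a P Q t = 0) -> P = 0 /\ Q = 0.
Proof.
intros Ha Hlh H.
set (m := (lo + hi) / 2).
assert (Hm : lo < m < hi) by (unfold m; lra).
assert (H1 := derive_vanishes_on _ _ lo hi H (fun t _ => is_derive_trig a P Q t) m Hm).
assert (H0 := H m Hm).
unfold trig in H0, H1.
pose proof (sin2_cos2 (a * m)) as HS. unfold Rsqr in HS.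
set (c := cos (a * m)) in *. set (s := sin (a * m)) in *.
assert (E1 : Q * c - P * s = 0).
{ apply (Rmult_eq_reg_l a); [| exact Ha]. rewrite Rmult_0_r, <- H1. ring. }
split.
- transitivity (c * (P * c + Q * s) - s * (Q * c - P * s)).
  + transitivity (P * (s * s + c * c)); [rewrite HS |]; ring.
  + rewrite H0, E1; ring.
- transitivity (s * (P * c + Q * s) + c * (Q * c - P * s)).
  + transitivity (Q * (s * s + c * c)); [rewrite HS |]; ring.
  + rewrite H0, E1; ring.
Qed.

Lemma damped_solution (y y1 y2 : R -> R) (a b lo hi : R) : a <> 0 -> lo < hi ->
  (forall t, lo < t < hi ->
     is_derive y t (y1 t) /\ is_derive y1 t (y2 t) /\
     y2 t = - 2 * b * y1 t - (a ^ 2 + b ^ 2) * y t) ->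
  exists P Q, forall t, lo < t < hi -> y t = exp_trig (- b) a P Q t.
Proof.
intros Ha Hlh H.
destruct (harmonic_solution (fun t => exp (b * t) * y t)
   (fun t => exp (b * t) * (y1 t + b * y t))
   (fun t => exp (b * t) * (y2 t + 2 * b * y1 t + b ^ 2 * y t)) a lo hi Ha Hlh)
  as [P [Q HPQ]].
{ intros t Ht. destruct (H t Ht) as [D0 [D1 E]]. split; [| split].
  - eapply is_derive_eq; [apply is_derive_Rmult; [apply is_derive_exp_scal | exact D0] |].
    cbv beta; ring.
  - eapply is_derive_eq.
    + apply is_derive_Rmult; [apply is_derive_exp_scal |].
      apply is_derive_Rplus; [exact D1 | apply is_derive_scal, D0].
    + cbv beta; ring.
  - rewrite E; ring. }
exists P, Q. intros t Ht. unfold exp_trig. rewrite <- HPQ by exact Ht.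
rewrite <- Rmult_assoc, <- exp_plus.
replace (- b * t + b * t) with 0 by ring. rewrite exp_0. ring.
Qed.

(** * Fourth-order equations [w'''' + m w'' + c w = 0] *)

Definition quartic_chain (lo hi m c : R) (w0 w1 w2 w3 w4 : R -> R) : Prop :=
  forall t, lo < t < hi ->
    is_derive w0 t (w1 t) /\ is_derive w1 t (w2 t) /\ is_derive w2 t (w3 t) /\
    is_derive w3 t (w4 t) /\ w4 t = - m * w2 t - c * w0 t.

Lemma exp_trig_pair_hyperbolic (a b A B C D t : R) :
  exp_trig b a A B t + exp_trig (- b) a C D t =
  (A - C) * (cos (a * t) * sinh (b * t)) + (B + D) * (sin (a * t) * cosh (b * t))
  + (B - D) * (sin (a * t) * sinh (b * t)) + (A + C) * (cos (a * t) * cosh (b * t)).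
Proof.
unfold exp_trig, trig, sinh, cosh.
replace (- b * t) with (- (b * t)) by ring. field.
Qed.

Lemma quartic_solution_distinct (lo hi a1 a2 : R) (w0 w1 w2 w3 w4 : R -> R) :
  0 < a1 -> a1 < a2 -> lo < hi ->
  quartic_chain lo hi (a1 ^ 2 + a2 ^ 2) (a1 ^ 2 * a2 ^ 2) w0 w1 w2 w3 w4 ->
  exists c1 c2 c3 c4, forall t, lo < t < hi ->
    w0 t = c1 * sin (a1 * t) + c2 * sin (a2 * t) + c3 * cos (a1 * t) + c4 * cos (a2 * t).
Proof.
intros H1 H2 Hlh Hw.
set (d := a2 ^ 2 - a1 ^ 2).
assert (Hd : d <> 0) by (unfold d; nra).
destruct (harmonic_solution (fun t => w2 t + a2 ^ 2 * w0 t) (fun t => w3 t + a2 ^ 2 * w1 t)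
  (fun t => w4 t + a2 ^ 2 * w2 t) a1 lo hi) as [P [Q HPQ]]; try lra.
{ intros t Ht. destruct (Hw t Ht) as [D0 [D1 [D2 [D3 E]]]]. split; [| split].
  - apply is_derive_Rplus; [exact D2 | apply is_derive_scal, D0].
  - apply is_derive_Rplus; [exact D3 | apply is_derive_scal, D1].
  - rewrite E; ring. }
(* [trig a1 (P/d) (Q/d)] is a particular solution of [w'' + a2^2 w = trig a1 P Q] *)
destruct (harmonic_solution (fun t => w0 t - trig a1 (P / d) (Q / d) t)
   (fun t => w1 t - trig a1 (a1 * (Q / d)) (- (a1 * (P / d))) t)
   (fun t => w2 t - trig a1 (a1 * - (a1 * (P / d))) (- (a1 * (a1 * (Q / d)))) t)
   a2 lo hi) as [P' [Q' HPQ']]; try lra.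
{ intros t Ht. destruct (Hw t Ht) as [D0 [D1 [D2 [D3 E]]]]. split; [| split].
  - apply is_derive_Rminus; [exact D0 | apply is_derive_trig].
  - apply is_derive_Rminus; [exact D1 | apply is_derive_trig].
  - specialize (HPQ t Ht). cbv beta in HPQ |- *. unfold trig in *.
    assert (E2 : w2 t = P * cos (a1 * t) + Q * sin (a1 * t) - a2 ^ 2 * w0 t)
      by (rewrite <- HPQ; ring).
    rewrite E2. unfold d in *. field. exact Hd. }
exists (Q / d), Q', (P / d), P'. intros t Ht.
specialize (HPQ' t Ht). cbv beta in HPQ'. unfold trig in *.
replace (w0 t) with (w0 t - (P / d * cos (a1 * t) + Q / d * sin (a1 * t))
                     + (P / d * cos (a1 * t) + Q / d * sin (a1 * t))) by ring.
rewrite HPQ'. ring.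
Qed.

Lemma quartic_solution_double (lo hi a : R) (w0 w1 w2 w3 w4 : R -> R) :
  0 < a -> lo < hi ->
  quartic_chain lo hi (2 * a ^ 2) (a ^ 4) w0 w1 w2 w3 w4 ->
  exists c1 c2 c3 c4, forall t, lo < t < hi ->
    w0 t = c1 * sin (a * t) + c2 * cos (a * t) + c3 * (t * sin (a * t))
           + c4 * (t * cos (a * t)).
Proof.
intros H1 Hlh Hw.
destruct (harmonic_solution (fun t => w2 t + a ^ 2 * w0 t) (fun t => w3 t + a ^ 2 * w1 t)
  (fun t => w4 t + a ^ 2 * w2 t) a lo hi) as [P [Q HPQ]]; try lra.
{ intros t Ht. destruct (Hw t Ht) as [D0 [D1 [D2 [D3 E]]]]. split; [| split].
  - apply is_derive_Rplus; [exact D2 | apply is_derive_scal, D0].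
  - apply is_derive_Rplus; [exact D3 | apply is_derive_scal, D1].
  - rewrite E; ring. }
(* resonance: the particular solution of [w'' + a^2 w = trig a P Q] is [t * trig a X Y] *)
set (X := - Q / (2 * a)). set (Y := P / (2 * a)).
destruct (harmonic_solution (fun t => w0 t - t * trig a X Y t)
   (fun t => w1 t - (trig a X Y t + t * trig a (a * Y) (- (a * X)) t))
   (fun t => w2 t - (trig a (a * Y) (- (a * X)) t + (trig a (a * Y) (- (a * X)) t
      + t * trig a (a * - (a * X)) (- (a * (a * Y))) t))) a lo hi) as [P' [Q' HPQ']];
  try lra.
{ intros t Ht. destruct (Hw t Ht) as [D0 [D1 [D2 [D3 E]]]]. split; [| split].
  - apply is_derive_Rminus; [exact D0 | apply is_derive_id_mult_trig].
  - apply is_derive_Rminus; [exact D1 |].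
    apply is_derive_Rplus; [apply is_derive_trig | apply is_derive_id_mult_trig].
  - specialize (HPQ t Ht). cbv beta in HPQ |- *. unfold trig in *.
    assert (E2 : w2 t = P * cos (a * t) + Q * sin (a * t) - a ^ 2 * w0 t)
      by (rewrite <- HPQ; ring).
    rewrite E2. unfold X, Y. field. lra. }
exists Q', P', Y, X. intros t Ht.
specialize (HPQ' t Ht). cbv beta in HPQ'. unfold trig in *.
replace (w0 t) with (w0 t - t * (X * cos (a * t) + Y * sin (a * t))
                     + t * (X * cos (a * t) + Y * sin (a * t))) by ring.
rewrite HPQ'. ring.
Qed.

Lemma quartic_solution_complex (lo hi a b : R) (w0 w1 w2 w3 w4 : R -> R) :
  0 < a -> 0 < b -> lo < hi ->
  quartic_chain lo hi (2 * (a ^ 2 - b ^ 2)) ((a ^ 2 + b ^ 2) ^ 2) w0 w1 w2 w3 w4 ->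
  exists c1 c2 c3 c4, forall t, lo < t < hi ->
    w0 t = c1 * (cos (a * t) * sinh (b * t)) + c2 * (sin (a * t) * cosh (b * t))
         + c3 * (sin (a * t) * sinh (b * t)) + c4 * (cos (a * t) * cosh (b * t)).
Proof.
intros Ha Hb Hlh Hw.
set (p := a ^ 2 + b ^ 2).
assert (Hp : 0 < p) by (unfold p; nra).
(* [D^4 + m D^2 + c] factors as [(D^2 - 2bD + p) (D^2 + 2bD + p)] *)
destruct (damped_solution (fun t => w2 t + 2 * b * w1 t + p * w0 t)
  (fun t => w3 t + 2 * b * w2 t + p * w1 t)
  (fun t => w4 t + 2 * b * w3 t + p * w2 t) a (- b) lo hi) as [P [Q HPQ]]; try lra.
{ intros t Ht. destruct (Hw t Ht) as [D0 [D1 [D2 [D3 E]]]]. split; [| split].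
  - apply is_derive_Rplus; [apply is_derive_Rplus; [exact D2 | apply is_derive_scal, D1] |].
    apply is_derive_scal, D0.
  - apply is_derive_Rplus; [apply is_derive_Rplus; [exact D3 | apply is_derive_scal, D2] |].
    apply is_derive_scal, D1.
  - rewrite E. unfold p. ring. }
replace (- - b) with b in HPQ by ring.
set (A := (P * b - Q * a) / (4 * b * p)). set (B := (P * a + Q * b) / (4 * b * p)).
destruct (damped_solution (fun t => w0 t - exp_trig b a A B t)
   (fun t => w1 t - exp_trig b a (b * A + a * B) (b * B - a * A) t)
   (fun t => w2 t - exp_trig b a (b * (b * A + a * B) + a * (b * B - a * A))
                                 (b * (b * B - a * A) - a * (b * A + a * B)) t)
   a b lo hi) as [P' [Q' HPQ']]; try lra.
{ intros t Ht. destruct (Hw t Ht) as [D0 [D1 [D2 [D3 E]]]]. split; [| split].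
  - apply is_derive_Rminus; [exact D0 | apply is_derive_exp_trig].
  - apply is_derive_Rminus; [exact D1 | apply is_derive_exp_trig].
  - specialize (HPQ t Ht). cbv beta in HPQ |- *. unfold exp_trig, trig in *.
    assert (E2 : w2 t = exp (b * t) * (P * cos (a * t) + Q * sin (a * t))
                        - 2 * b * w1 t - p * w0 t) by (rewrite <- HPQ; ring).
    rewrite E2. unfold A, B, p in *. field. lra. }
exists (A - P'), (B + Q'), (B - Q'), (A + P'). intros t Ht.
rewrite <- exp_trig_pair_hyperbolic, <- HPQ' by exact Ht. ring.
Qed.

Lemma trig_indep_distinct (lo hi a1 a2 c1 c2 c3 c4 : R) : 0 < a1 -> a1 < a2 -> lo < hi ->
  (forall t, lo < t < hi ->
    c1 * sin (a1 * t) + c2 * sin (a2 * t) + c3 * cos (a1 * t) + c4 * cos (a2 * t) = 0) ->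
  c1 = 0 /\ c2 = 0 /\ c3 = 0 /\ c4 = 0.
Proof.
intros H1 H2 Hlh H.
set (g := fun t => trig a1 c3 c1 t + trig a2 c4 c2 t).
set (g1 := fun t => trig a1 (a1 * c1) (- (a1 * c3)) t + trig a2 (a2 * c2) (- (a2 * c4)) t).
set (g2 := fun t => trig a1 (a1 * - (a1 * c3)) (- (a1 * (a1 * c1))) t
                    + trig a2 (a2 * - (a2 * c4)) (- (a2 * (a2 * c2))) t).
assert (G0 : forall t, lo < t < hi -> g t = 0).
{ intros t Ht. rewrite <- (H t Ht). unfold g, trig. ring. }
assert (G2 : forall t, lo < t < hi -> g2 t = 0).
{ apply (derive_vanishes_on g1 g2 lo hi);
    [apply (derive_vanishes_on g g1 lo hi G0) |]; intros t _;
    apply is_derive_Rplus; apply is_derive_trig. }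
assert (Hd : a2 ^ 2 - a1 ^ 2 <> 0) by nra.
(* [g'' + a2^2 g] only keeps the [a1]-frequency *)
destruct (trig_eq0 a1 ((a2 ^ 2 - a1 ^ 2) * c3) ((a2 ^ 2 - a1 ^ 2) * c1) lo hi)
  as [Z3 Z1]; try lra.
{ intros t Ht. transitivity (g2 t + a2 ^ 2 * g t).
  - unfold g2, g, trig. ring.
  - rewrite G0, G2 by exact Ht. ring. }
apply Rmult_integral in Z3, Z1.
assert (c3 = 0) by tauto. assert (c1 = 0) by tauto. subst c1 c3.
destruct (trig_eq0 a2 c4 c2 lo hi) as [Z4 Z2]; try lra.
{ intros t Ht. rewrite <- (G0 t Ht). unfold g, trig. ring. }
Qed.

Lemma trig_indep_double (lo hi a c1 c2 c3 c4 : R) : 0 < a -> lo < hi ->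
  (forall t, lo < t < hi ->
    c1 * sin (a * t) + c2 * cos (a * t) + c3 * (t * sin (a * t))
    + c4 * (t * cos (a * t)) = 0) ->
  c1 = 0 /\ c2 = 0 /\ c3 = 0 /\ c4 = 0.
Proof.
intros H1 Hlh H.
set (g := fun t => trig a c2 c1 t + t * trig a c4 c3 t).
set (g1 := fun t => trig a (a * c1) (- (a * c2)) t
                    + (trig a c4 c3 t + t * trig a (a * c3) (- (a * c4)) t)).
set (g2 := fun t => trig a (a * - (a * c2)) (- (a * (a * c1))) t
   + (trig a (a * c3) (- (a * c4)) t + (trig a (a * c3) (- (a * c4)) t
   + t * trig a (a * - (a * c4)) (- (a * (a * c3))) t))).
assert (G0 : forall t, lo < t < hi -> g t = 0).
{ intros t Ht. rewrite <- (H t Ht). unfold g, trig. ring. }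
assert (G2 : forall t, lo < t < hi -> g2 t = 0).
{ apply (derive_vanishes_on g1 g2 lo hi).
  - apply (derive_vanishes_on g g1 lo hi G0). intros t _.
    apply is_derive_Rplus; [apply is_derive_trig | apply is_derive_id_mult_trig].
  - intros t _. apply is_derive_Rplus; [apply is_derive_trig |].
    apply is_derive_Rplus; [apply is_derive_trig | apply is_derive_id_mult_trig]. }
destruct (trig_eq0 a (2 * a * c3) (- (2 * a * c4)) lo hi) as [Z3 Z4]; try lra.
{ intros t Ht. transitivity (g2 t + a ^ 2 * g t).
  - unfold g2, g, trig. ring.
  - rewrite G0, G2 by exact Ht. ring. }
assert (c3 = 0) by nra. assert (c4 = 0) by nra. subst c3 c4.
destruct (trig_eq0 a c2 c1 lo hi) as [Z2 Z1]; try lra.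
{ intros t Ht. rewrite <- (G0 t Ht). unfold g, trig. ring. }
Qed.

Lemma coeffs_eq0 (a b P Q : R) : 0 < b ->
  b * P + a * Q = 0 -> b * Q - a * P = 0 -> P = 0 /\ Q = 0.
Proof.
intros Hb E1 E2.
assert (E3 : (a ^ 2 + b ^ 2) * P = 0).
{ replace ((a ^ 2 + b ^ 2) * P) with (b * (b * P + a * Q) - a * (b * Q - a * P)) by ring.
  rewrite E1, E2. ring. }
assert (E4 : (a ^ 2 + b ^ 2) * Q = 0).
{ replace ((a ^ 2 + b ^ 2) * Q) with (a * (b * P + a * Q) + b * (b * Q - a * P)) by ring.
  rewrite E1, E2. ring. }
assert (Hq : a ^ 2 + b ^ 2 <> 0) by nra.
apply Rmult_integral in E3, E4. tauto.
Qed.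

Lemma exp_trig_pair_indep (lo hi a b A B C D : R) : 0 < a -> 0 < b -> lo < hi ->
  (forall t, lo < t < hi -> exp_trig b a A B t + exp_trig (- b) a C D t = 0) ->
  A = 0 /\ B = 0 /\ C = 0 /\ D = 0.
Proof.
intros Ha Hb Hlh H.
set (p := a ^ 2 + b ^ 2).
set (g := fun t => exp_trig b a A B t + exp_trig (- b) a C D t).
set (g1 := fun t => exp_trig b a (b * A + a * B) (b * B - a * A) t
                    + exp_trig (- b) a (- b * C + a * D) (- b * D - a * C) t).
set (g2 := fun t =>
  exp_trig b a (b * (b * A + a * B) + a * (b * B - a * A))
               (b * (b * B - a * A) - a * (b * A + a * B)) t
  + exp_trig (- b) a (- b * (- b * C + a * D) + a * (- b * D - a * C))
               (- b * (- b * D - a * C) - a * (- b * C + a * D)) t).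
assert (Dg : forall t, lo < t < hi -> is_derive g t (g1 t)).
{ intros t _. apply is_derive_Rplus; apply is_derive_exp_trig. }
assert (Dg1 : forall t, lo < t < hi -> is_derive g1 t (g2 t)).
{ intros t _. apply is_derive_Rplus; apply is_derive_exp_trig. }
assert (G0 : forall t, lo < t < hi -> g t = 0) by exact H.
assert (G1 := derive_vanishes_on g g1 lo hi G0 Dg).
assert (G2 := derive_vanishes_on g1 g2 lo hi G1 Dg1).
(* [g'' + 2b g' + p g] and [g'' - 2b g' + p g] each keep only one exponential *)
destruct (trig_eq0 a (4 * b * (b * A + a * B)) (4 * b * (b * B - a * A)) lo hi)
  as [X1 X2]; try lra.
{ intros t Ht. transitivity (exp (- (b * t)) * (g2 t + 2 * b * g1 t + p * g t)).
  - transitivity (exp (- (b * t)) * exp (b * t)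
                  * trig a (4 * b * (b * A + a * B)) (4 * b * (b * B - a * A)) t).
    + rewrite <- exp_plus. replace (- (b * t) + b * t) with 0 by ring. rewrite exp_0. ring.
    + unfold g2, g1, g, exp_trig, trig, p. ring.
  - rewrite G0, G1, G2 by exact Ht. ring. }
destruct (trig_eq0 a (4 * b * (b * C - a * D)) (4 * b * (b * D + a * C)) lo hi)
  as [X3 X4]; try lra.
{ intros t Ht. transitivity (exp (b * t) * (g2 t - 2 * b * g1 t + p * g t)).
  - transitivity (exp (b * t) * exp (- b * t)
                  * trig a (4 * b * (b * C - a * D)) (4 * b * (b * D + a * C)) t).
    + rewrite <- exp_plus. replace (b * t + - b * t) with 0 by ring. rewrite exp_0. ring.
    + unfold g2, g1, g, exp_trig, trig, p. ring.
  - rewrite G0, G1, G2 by exact Ht. ring. }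
destruct (coeffs_eq0 a b A B) as [-> ->]; [lra | nra | nra |].
destruct (coeffs_eq0 (- a) b C D) as [-> ->]; [lra | nra | nra |].
auto.
Qed.

Lemma trig_indep_complex (lo hi a b c1 c2 c3 c4 : R) : 0 < a -> 0 < b -> lo < hi ->
  (forall t, lo < t < hi ->
    c1 * (cos (a * t) * sinh (b * t)) + c2 * (sin (a * t) * cosh (b * t))
    + c3 * (sin (a * t) * sinh (b * t)) + c4 * (cos (a * t) * cosh (b * t)) = 0) ->
  c1 = 0 /\ c2 = 0 /\ c3 = 0 /\ c4 = 0.
Proof.
intros Ha Hb Hlh H.
destruct (exp_trig_pair_indep lo hi a b ((c1 + c4) / 2) ((c2 + c3) / 2)
            ((c4 - c1) / 2) ((c2 - c3) / 2)) as [E1 [E2 [E3 E4]]]; auto.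
- intros t Ht. rewrite exp_trig_pair_hyperbolic, <- (H t Ht). field.
- lra.
Qed.

(** * The equation in the variable [theta] *)

Lemma is_derive_Derive_n_solution (x0 L mu : R) (u : R -> R) (j : nat) (s : R) :
  is_solution x0 L mu u -> in_dom L s -> (j <= 3)%nat ->
  is_derive (Derive_n u j) s (Derive_n u (S j) s).
Proof.
intros [HC _] Hs Hj. destruct (HC s Hs) as [Hn _].
apply Derive_correct. apply (Hn (S j)). lia.
Qed.

Section CriticalCurve.

Variables x0 L : R.
Hypothesis Hx0 : 0 < 3 * x0.
Hypothesis HxL : 3 * x0 < L.

Let c := x0 / (L + x0).
Let a := sqrt c.
Let k := kk x0 L.
Let sg := sigma0 x0 L.

Lemma ratio_bounds : 0 < c < 1 / 4.
Proof.
unfold c. split.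
- apply Rdiv_lt_0_compat; lra.
- apply (Rmult_lt_reg_r (L + x0)); [lra |].
  unfold Rdiv. rewrite Rmult_assoc, Rinv_l by lra. lra.
Qed.

Lemma sqrt_ratio_bounds : 0 < a < 1 / 2.
Proof.
pose proof ratio_bounds. unfold a. split.
- apply sqrt_lt_R0; lra.
- rewrite <- (sqrt_pow2 (1 / 2)) by lra. apply sqrt_lt_1_alt. lra.
Qed.

Lemma sqrt_ratio_sq : a ^ 2 = c.
Proof. pose proof ratio_bounds. unfold a. simpl. rewrite Rmult_1_r. apply sqrt_sqrt. lra. Qed.

Lemma sigma0_bounds : 0 < sg < PI / 2.
Proof.
pose proof sqrt_ratio_bounds. pose proof PI_RGT_0.
change sg with (PI * a). split; nra.
Qed.

Lemma sin_sigma0_bounds : 0 < sin sg < 1.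
Proof.
pose proof sigma0_bounds. pose proof PI_RGT_0. split.
- apply sin_gt_0; lra.
- rewrite <- sin_PI2. apply sin_increasing_1; lra.
Qed.

Lemma kk_sin_sigma0 : k * sin sg = L.
Proof. pose proof sin_sigma0_bounds. unfold k, kk. fold sg. field. lra. Qed.

Lemma kk_gt : L < k.
Proof. pose proof sin_sigma0_bounds. pose proof kk_sin_sigma0. nra. Qed.

Let rad (t : R) : R := sqrt (k ^ 2 - (t - L) ^ 2).

Lemma rad_pos (t : R) : in_dom L t -> 0 < rad t.
Proof. intros Ht. pose proof kk_gt. unfold in_dom in Ht. apply sqrt_lt_R0. nra. Qed.

Lemma is_derive_rad (t : R) : in_dom L t -> is_derive rad t (- (t - L) / rad t).
Proof.
intros Ht. pose proof (rad_pos t Ht). pose proof kk_gt. unfold in_dom in Ht.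
unfold rad in *. eapply is_derive_eq.
- apply (is_derive_sqrt (fun t => k ^ 2 - (t - L) ^ 2)); [auto_derive; auto | nra].
- field. lra.
Qed.

(* The coefficients of the equation in terms of [rad], using [H = 1 / (a rad)]. *)
Let r (t : R) : R := 2 * a ^ 3 * (rad t * rad t * rad t).
Let r' (t : R) : R := - 6 * a ^ 3 * (t - L) * rad t.
Let r'' (t : R) : R := - 6 * a ^ 3 * (rad t - (t - L) ^ 2 / rad t).
Let q (t : R) : R := 2 * a * rad t.
Let q' (t : R) : R := - 2 * a * (t - L) / rad t.
Let p (t : R) : R := 2 * a / rad t.

Lemma coefficients_eq (t : R) : in_dom L t ->
  rr x0 L t = r t /\ qq x0 L t = q t /\ pp x0 L t = p t.
Proof.
intros Ht. pose proof (rad_pos t Ht). pose proof sqrt_ratio_bounds. pose proof PI_RGT_0.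
unfold rr, qq, pp, Hc, lambda0, r, q, p. fold k c a sg. change sg with (PI * a).
change (sqrt (k ^ 2 - (t - L) ^ 2)) with (rad t).
repeat split; try (field; lra).
replace (2 - 2 * L / (L + x0)) with (2 * c) by (unfold c; field; lra).
rewrite <- sqrt_ratio_sq. field. lra.
Qed.

Lemma is_derive_r (t : R) : in_dom L t -> is_derive r t (r' t).
Proof.
intros Ht. pose proof (rad_pos t Ht). unfold r, r'. eapply is_derive_eq.
- apply is_derive_scal.
  apply is_derive_Rmult; [apply is_derive_Rmult |]; apply is_derive_rad, Ht.
- cbv beta. field. lra.
Qed.

Lemma is_derive_r' (t : R) : in_dom L t -> is_derive r' t (r'' t).
Proof.
intros Ht. pose proof (rad_pos t Ht). unfold r', r''. eapply is_derive_eq.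
- apply is_derive_Rmult; [| apply is_derive_rad, Ht].
  apply is_derive_scal, is_derive_Rminus; [apply is_derive_Rid | apply is_derive_Rconst].
- cbv beta. field. lra.
Qed.

Lemma is_derive_q (t : R) : in_dom L t -> is_derive q t (q' t).
Proof.
intros Ht. pose proof (rad_pos t Ht). unfold q, q'. eapply is_derive_eq.
- apply is_derive_scal, is_derive_rad, Ht.
- field. lra.
Qed.

Lemma ode_expanded (mu : R) (u : R -> R) (s : R) :
  is_solution x0 L mu u -> in_dom L s ->
  r'' s * Derive_n u 2 s + 2 * r' s * Derive_n u 3 s + r s * Derive_n u 4 s
  + mu * (q' s * Derive_n u 1 s + q s * Derive_n u 2 s) + p s * u s = 0.
Proof.
intros Hsol Hs.
assert (Du : forall j t, (j <= 3)%nat -> in_dom L t ->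
               is_derive (Derive_n u j) t (Derive_n u (S j) t))
  by (intros j t Hj Ht; exact (is_derive_Derive_n_solution x0 L mu u j t Hsol Ht Hj)).
assert (Inner : forall t, in_dom L t ->
  Derive (fun t' => rr x0 L t' * Derive_n u 2 t') t
  = r' t * Derive_n u 2 t + r t * Derive_n u 3 t).
{ intros t Ht. apply is_derive_unique.
  apply (is_derive_ext_loc (fun t' => r t' * Derive_n u 2 t')).
  - apply (filter_imp (in_dom L)); [| now apply locally_open_interval].
    intros y Hy. now rewrite (proj1 (coefficients_eq y Hy)).
  - apply is_derive_Rmult; [apply is_derive_r, Ht | apply Du; [lia | exact Ht]]. }
assert (Outer : Derive (fun t => Derive (fun t' => rr x0 L t' * Derive_n u 2 t') t) s
  = r'' s * Derive_n u 2 s + 2 * r' s * Derive_n u 3 s + r s * Derive_n u 4 s).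
{ rewrite (Derive_ext_loc _ (fun t => r' t * Derive_n u 2 t + r t * Derive_n u 3 t)).
  - apply is_derive_unique. eapply is_derive_eq.
    + apply is_derive_Rplus; apply is_derive_Rmult.
      * apply is_derive_r', Hs.
      * apply Du; [lia | exact Hs].
      * apply is_derive_r, Hs.
      * apply Du; [lia | exact Hs].
    + ring.
  - apply (filter_imp (in_dom L)); [| now apply locally_open_interval].
    intros y Hy. now apply Inner. }
assert (Middle : Derive (fun t => qq x0 L t * Derive u t) s
  = q' s * Derive_n u 1 s + q s * Derive_n u 2 s).
{ rewrite (Derive_ext_loc _ (fun t => q t * Derive_n u 1 t)).
  - apply is_derive_unique.
    apply is_derive_Rmult; [apply is_derive_q, Hs | apply Du; [lia | exact Hs]].
  - apply (filter_imp (in_dom L)); [| now apply locally_open_interval].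
    intros y Hy. now rewrite (proj1 (proj2 (coefficients_eq y Hy))). }
destruct Hsol as [_ Hode]. specialize (Hode s Hs).
rewrite Outer, Middle, (proj2 (proj2 (coefficients_eq s Hs))) in Hode. exact Hode.
Qed.

(* [s_of] is the inverse of [theta] (recall [sigma0 = PI * a]). *)
Let s_of (th : R) : R := L + k * sin (a * th - sg).
Let cs (th : R) : R := cos (a * th - sg).
Let sn (th : R) : R := sin (a * th - sg).

Lemma phase_bounds (th : R) : 0 < th < 2 * PI -> - sg < a * th - sg < sg.
Proof.
intros Hth. pose proof sqrt_ratio_bounds. pose proof PI_RGT_0.
change sg with (PI * a). nra.
Qed.

Lemma cs_pos (th : R) : 0 < th < 2 * PI -> 0 < cs th.
Proof.
intros Hth. pose proof (phase_bounds th Hth). pose proof sigma0_bounds.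
apply cos_gt_0; lra.
Qed.

Lemma s_of_in_dom (th : R) : 0 < th < 2 * PI -> in_dom L (s_of th).
Proof.
intros Hth. pose proof (phase_bounds th Hth). pose proof sigma0_bounds.
pose proof kk_sin_sigma0. pose proof kk_gt.
assert (- sin sg < sn th < sin sg).
{ unfold sn. rewrite <- sin_neg. split; apply sin_increasing_1; lra. }
unfold in_dom, s_of. fold (sn th). split; nra.
Qed.

Lemma rad_s_of (th : R) : 0 < th < 2 * PI -> rad (s_of th) = k * cs th.
Proof.
intros Hth. pose proof (cs_pos th Hth). pose proof kk_gt.
unfold rad, s_of. rewrite <- (sqrt_pow2 (k * cs th)) by nra. f_equal.
pose proof (sin2_cos2 (a * th - sg)) as E. unfold Rsqr in E. unfold cs.
transitivity (k ^ 2 * (sin (a * th - sg) * sin (a * th - sg) + cos (a * th - sg) * cos (a * th - sg))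
              - (k * sin (a * th - sg)) ^ 2); [rewrite E |]; ring.
Qed.

Lemma theta_s_of (th : R) : 0 < th < 2 * PI -> theta x0 L (s_of th) = th.
Proof.
intros Hth. pose proof (phase_bounds th Hth). pose proof sigma0_bounds.
pose proof kk_gt. pose proof sqrt_ratio_bounds. pose proof PI_RGT_0.
unfold theta, s_of. fold k sg.
replace ((L + k * sin (a * th - sg) - L) / k) with (sin (a * th - sg)) by (field; lra).
rewrite asin_sin by lra.
change sg with (PI * a). field. lra.
Qed.

Lemma theta_bounds_s_of_theta (s : R) : in_dom L s ->
  0 < theta x0 L s < 2 * PI /\ s_of (theta x0 L s) = s.
Proof.
intros Hs. pose proof sin_sigma0_bounds. pose proof sigma0_bounds.
pose proof kk_gt. pose proof kk_sin_sigma0. pose proof sqrt_ratio_bounds. pose proof PI_RGT_0.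
unfold in_dom in Hs.
set (x := (s - L) / k).
assert (Hx : - sin sg < x < sin sg).
{ unfold x. split; apply (Rmult_lt_reg_r k); try lra;
    unfold Rdiv; rewrite Rmult_assoc, Rinv_l by lra; nra. }
pose proof (asin_bound x).
assert (Hsa : sin (asin x) = x) by (apply sin_asin; lra).
assert (Hph : - sg < asin x < sg).
{ split; apply sin_increasing_0; try rewrite sin_neg; lra. }
assert (Ht : a * theta x0 L s - sg = asin x).
{ unfold theta. fold sg k. fold x. change sg with (PI * a) in *. field. lra. }
split.
- unfold theta. fold sg k x. change sg with (PI * a) in *.
  assert (- 1 < / (PI * a) * asin x < 1).
  { split; apply (Rmult_lt_reg_l (PI * a)); try nra;
      rewrite <- Rmult_assoc, Rinv_r by nra; lra. }
  split; nra.
- unfold s_of. rewrite Ht, Hsa. unfold x. field. lra.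
Qed.

Section Transfer.

Variable mu : R.
Variable u : R -> R.
Hypothesis Hsol : is_solution x0 L mu u.

Let U (j : nat) (th : R) : R := Derive_n u j (s_of th).
Let v (th : R) : R := k * a * cs th.
Let v' (th : R) : R := - (k * a ^ 2) * sn th.
Let v'' (th : R) : R := - (k * a ^ 3) * cs th.
Let v''' (th : R) : R := k * a ^ 4 * sn th.

(* Faa di Bruno for [U 0 = u o s_of], whose derivative is [v] *)
Let w1 (th : R) : R := U 1 th * v th.
Let w2 (th : R) : R := U 2 th * v th ^ 2 + U 1 th * v' th.
Let w3 (th : R) : R := U 3 th * v th ^ 3 + 3 * U 2 th * v th * v' th + U 1 th * v'' th.
Let w4 (th : R) : R := U 4 th * v th ^ 4 + 6 * U 3 th * v th ^ 2 * v' th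
  + U 2 th * (3 * v' th ^ 2 + 4 * v th * v'' th) + U 1 th * v''' th.

Lemma is_derive_s_of (th : R) : is_derive s_of th (v th).
Proof. unfold s_of, v, cs. auto_derive; auto. unfold Rminus. ring. Qed.

Lemma is_derive_U (j : nat) (th : R) : (j <= 3)%nat -> 0 < th < 2 * PI ->
  is_derive (U j) th (U (S j) th * v th).
Proof.
intros Hj Hth. unfold U. eapply is_derive_eq.
- apply (is_derive_comp (Derive_n u j) s_of).
  + apply (is_derive_Derive_n_solution x0 L mu); [exact Hsol | apply s_of_in_dom, Hth | exact Hj].
  + apply is_derive_s_of.
- apply Rmult_comm.
Qed.

Lemma is_derive_v (th : R) : is_derive v th (v' th).
Proof. unfold v, v', cs, sn. auto_derive; auto. unfold Rminus. ring. Qed.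

Lemma is_derive_v' (th : R) : is_derive v' th (v'' th).
Proof. unfold v', v'', cs, sn. auto_derive; auto. unfold Rminus. ring. Qed.

Lemma is_derive_v'' (th : R) : is_derive v'' th (v''' th).
Proof. unfold v'', v''', cs, sn. auto_derive; auto. unfold Rminus. ring. Qed.

Lemma ode_along_s_of (th : R) : 0 < th < 2 * PI ->
  w4 th = - (mu + c) * w2 th - c * U 0 th.
Proof.
intros Hth. pose proof (cs_pos th Hth). pose proof kk_gt. pose proof sqrt_ratio_bounds.
pose proof (ode_expanded mu u (s_of th) Hsol (s_of_in_dom th Hth)) as E.
unfold r, r', r'', q, q', p in E. rewrite rad_s_of in E by exact Hth.
replace (s_of th - L) with (k * sn th) in E by (unfold s_of, sn; ring).
(* the equation in [theta] is [a k cs / 2] times the equation in [s] *)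
match type of E with ?X = 0 =>
  transitivity (- (mu + c) * w2 th - c * U 0 th + k * a * cs th / 2 * X) end.
- rewrite <- sqrt_ratio_sq. unfold w4, w2, v, v', v'', v''', U. simpl.
  field. split; lra.
- rewrite E. ring.
Qed.

Lemma solution_quartic_chain :
  quartic_chain 0 (2 * PI) (mu + c) c (U 0) w1 w2 w3 w4.
Proof.
intros th Hth. split; [| split; [| split; [| split]]].
- eapply is_derive_eq; [apply is_derive_U; [lia | exact Hth] |]. reflexivity.
- eapply is_derive_eq.
  + apply is_derive_Rmult; [apply is_derive_U; [lia | exact Hth] | apply is_derive_v].
  + unfold w2. ring.
- eapply is_derive_eq.
  + apply is_derive_Rplus; apply is_derive_Rmult.
    * apply is_derive_U; [lia | exact Hth].
    * apply is_derive_pow, is_derive_v.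
    * apply is_derive_U; [lia | exact Hth].
    * apply is_derive_v'.
  + unfold w3. cbn [Init.Nat.pred INR]. ring.
- eapply is_derive_eq.
  + apply is_derive_Rplus; [apply is_derive_Rplus |]; apply is_derive_Rmult.
    * apply is_derive_U; [lia | exact Hth].
    * apply is_derive_pow, is_derive_v.
    * apply is_derive_Rmult; [apply is_derive_scal, is_derive_U; [lia | exact Hth] |].
      apply is_derive_v.
    * apply is_derive_v'.
    * apply is_derive_U; [lia | exact Hth].
    * apply is_derive_v''.
  + unfold w4. cbn [Init.Nat.pred INR]. ring.
- apply ode_along_s_of, Hth.
Qed.

End Transfer.

Lemma basis_of_solutions_of_quartic (mu : R) (f1 f2 f3 f4 : R -> R) :
  (forall w0 w1 w2 w3 w4, quartic_chain 0 (2 * PI) (mu + c) c w0 w1 w2 w3 w4 ->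
     exists c1 c2 c3 c4, forall th, 0 < th < 2 * PI ->
       w0 th = c1 * f1 th + c2 * f2 th + c3 * f3 th + c4 * f4 th) ->
  (forall c1 c2 c3 c4, (forall th, 0 < th < 2 * PI ->
       c1 * f1 th + c2 * f2 th + c3 * f3 th + c4 * f4 th = 0) ->
     c1 = 0 /\ c2 = 0 /\ c3 = 0 /\ c4 = 0) ->
  basis_of_solutions x0 L mu f1 f2 f3 f4.
Proof.
intros Hrep Hind. split.
- intros u Hsol.
  destruct (Hrep _ _ _ _ _ (solution_quartic_chain mu u Hsol)) as [c1 [c2 [c3 [c4 Hc]]]].
  exists c1, c2, c3, c4. intros s Hs.
  destruct (theta_bounds_s_of_theta s Hs) as [Ht E].
  rewrite <- (Hc _ Ht). cbv beta. now rewrite E.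
- intros c1 c2 c3 c4 Hz. apply Hind. intros th Hth.
  rewrite <- (theta_s_of th Hth). apply Hz, s_of_in_dom, Hth.
Qed.

End CriticalCurve.

Lemma half_sqrt_sq (X : R) : 0 <= X -> (/ 2 * sqrt X) ^ 2 = X / 4.
Proof.
intros H. replace ((/ 2 * sqrt X) ^ 2) with (sqrt X * sqrt X / 4) by field.
now rewrite sqrt_sqrt.
Qed.

Lemma half_sqrt_pos (X : R) : 0 < X -> 0 < / 2 * sqrt X.
Proof. intros H. apply Rmult_lt_0_compat; [lra | apply sqrt_lt_R0, H]. Qed.

Lemma basis_complex (x0 L mu : R) : 0 < 3 * x0 -> 3 * x0 < L -> 0 < mu -> mu < mu0 x0 L ->
  basis_of_solutions x0 L mu
    (fun t => cos (alpha x0 L mu * t) * sinh (beta x0 L mu * t))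
    (fun t => sin (alpha x0 L mu * t) * cosh (beta x0 L mu * t))
    (fun t => sin (alpha x0 L mu * t) * sinh (beta x0 L mu * t))
    (fun t => cos (alpha x0 L mu * t) * cosh (beta x0 L mu * t)).
Proof.
intros H1 H2 Hmu Hlt.
pose proof (ratio_bounds x0 L H1 H2). pose proof (sqrt_ratio_bounds x0 L H1 H2).
pose proof (sqrt_ratio_sq x0 L H1 H2) as Eq. pose proof PI_RGT_0.
unfold mu0 in Hlt. unfold alpha, beta.
set (cc := x0 / (L + x0)) in *. set (q := sqrt cc) in *.
set (a := / 2 * sqrt (mu + cc + 2 * q)). set (b := / 2 * sqrt (- mu - cc + 2 * q)).
assert (Ea : a ^ 2 = (mu + cc + 2 * q) / 4) by (apply half_sqrt_sq; lra).
assert (Eb : b ^ 2 = (- mu - cc + 2 * q) / 4) by (apply half_sqrt_sq; lra).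
assert (Pa : 0 < a) by (apply half_sqrt_pos; lra).
assert (Pb : 0 < b) by (apply half_sqrt_pos; lra).
apply basis_of_solutions_of_quartic; auto.
- intros w0 w1 w2 w3 w4 Hch. fold cc in Hch.
  replace (mu + cc) with (2 * (a ^ 2 - b ^ 2)) in Hch by lra.
  replace cc with ((a ^ 2 + b ^ 2) ^ 2) in Hch by (rewrite Ea, Eb, <- Eq; field).
  apply (quartic_solution_complex _ _ a b _ w1 w2 w3 w4); auto; lra.
- intros c1 c2 c3 c4 Hz. apply (trig_indep_complex 0 (2 * PI) a b); auto; lra.
Qed.

Lemma basis_double (x0 L mu : R) : 0 < 3 * x0 -> 3 * x0 < L -> mu = mu0 x0 L ->
  basis_of_solutions x0 L mu
    (fun t => sin (alpha x0 L mu * t))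
    (fun t => cos (alpha x0 L mu * t))
    (fun t => t * sin (alpha x0 L mu * t))
    (fun t => t * cos (alpha x0 L mu * t)).
Proof.
intros H1 H2 Heq.
pose proof (ratio_bounds x0 L H1 H2). pose proof (sqrt_ratio_bounds x0 L H1 H2).
pose proof (sqrt_ratio_sq x0 L H1 H2) as Eq. pose proof PI_RGT_0.
unfold mu0 in Heq. unfold alpha.
set (cc := x0 / (L + x0)) in *. set (q := sqrt cc) in *.
set (a := / 2 * sqrt (mu + cc + 2 * q)).
assert (Ea : a ^ 2 = q) by (unfold a; rewrite half_sqrt_sq; lra).
assert (Pa : 0 < a) by (apply half_sqrt_pos; lra).
apply basis_of_solutions_of_quartic; auto.
- intros w0 w1 w2 w3 w4 Hch. fold cc in Hch.
  replace (mu + cc) with (2 * a ^ 2) in Hch by lra.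
  replace cc with (a ^ 4) in Hch by (rewrite <- Eq, <- Ea; ring).
  apply (quartic_solution_double _ _ a _ w1 w2 w3 w4); auto; lra.
- intros c1 c2 c3 c4 Hz. apply (trig_indep_double 0 (2 * PI) a); auto; lra.
Qed.

Lemma basis_distinct (x0 L mu : R) : 0 < 3 * x0 -> 3 * x0 < L -> mu0 x0 L < mu ->
  basis_of_solutions x0 L mu
    (fun t => sin ((alpha x0 L mu - gamma x0 L mu) * t))
    (fun t => sin ((alpha x0 L mu + gamma x0 L mu) * t))
    (fun t => cos ((alpha x0 L mu - gamma x0 L mu) * t))
    (fun t => cos ((alpha x0 L mu + gamma x0 L mu) * t)).
Proof.
intros H1 H2 Hgt.
pose proof (ratio_bounds x0 L H1 H2). pose proof (sqrt_ratio_bounds x0 L H1 H2).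
pose proof (sqrt_ratio_sq x0 L H1 H2) as Eq. pose proof PI_RGT_0.
unfold mu0 in Hgt. unfold alpha, gamma.
set (cc := x0 / (L + x0)) in *. set (q := sqrt cc) in *.
set (a := / 2 * sqrt (mu + cc + 2 * q)). set (g := / 2 * sqrt (mu + cc - 2 * q)).
assert (Ea : a ^ 2 = (mu + cc + 2 * q) / 4) by (apply half_sqrt_sq; lra).
assert (Eg : g ^ 2 = (mu + cc - 2 * q) / 4) by (apply half_sqrt_sq; lra).
assert (Pa : 0 < a) by (apply half_sqrt_pos; lra).
assert (Pg : 0 < g) by (apply half_sqrt_pos; lra).
assert (Hga : g < a) by nra.
apply basis_of_solutions_of_quartic; auto.
- intros w0 w1 w2 w3 w4 Hch. fold cc in Hch.
  replace (mu + cc) with ((a - g) ^ 2 + (a + g) ^ 2) in Hch by nra.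
  replace cc with ((a - g) ^ 2 * (a + g) ^ 2) in Hch.
  + apply (quartic_solution_distinct _ _ (a - g) (a + g) _ w1 w2 w3 w4); auto; lra.
  + replace ((a - g) ^ 2 * (a + g) ^ 2) with ((a ^ 2 - g ^ 2) ^ 2) by ring.
    rewrite Ea, Eg, <- Eq. field.
- intros c1 c2 c3 c4 Hz. apply (trig_indep_distinct 0 (2 * PI) (a - g) (a + g)); auto; lra.
Qed.

Theorem mainTheorem16 (x0 L mu : R) :
  0 < 3 * x0 -> 3 * x0 < L -> 0 < mu ->
  (mu < mu0 x0 L ->
     let a := alpha x0 L mu in let b := beta x0 L mu in
     basis_of_solutions x0 L mu
       (fun t => cos (a * t) * sinh (b * t))
       (fun t => sin (a * t) * cosh (b * t))
       (fun t => sin (a * t) * sinh (b * t))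
       (fun t => cos (a * t) * cosh (b * t)))
  /\
  (mu = mu0 x0 L ->
     let a := alpha x0 L mu in
     basis_of_solutions x0 L mu
       (fun t => sin (a * t))
       (fun t => cos (a * t))
       (fun t => t * sin (a * t))
       (fun t => t * cos (a * t)))
  /\
  (mu0 x0 L < mu ->
     let a := alpha x0 L mu in let g := gamma x0 L mu in
     basis_of_solutions x0 L mu
       (fun t => sin ((a - g) * t))
       (fun t => sin ((a + g) * t))
       (fun t => cos ((a - g) * t))
       (fun t => cos ((a + g) * t))).
Proof.
intros H1 H2 Hmu. split; [| split]; intros Hcase.
- now apply basis_complex.
- now apply basis_double.
- now apply basis_distinct.
Qed.
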